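(* Consider a canonical noiseless MMV model $B=AX$ in which $A$ satisfies $0\le\delta^L_{2k-r+1}(A)<1$ and the nonzero rows of $X$ are in general position. Let $I_{k-r}\subset\operatorname{supp}X$ with $|I_{k-r}|=k-r$. Then for any $j\in\{1,\dots,n\}\setminus I_{k-r}$, the following are equivalent: (a) $j\in\operatorname{supp}X$; (b) $\operatorname{rank}[A_{I_{k-r}\cup\{j\}}~B]<k+1$; (c) $\mathbf a_j^{*}P^{\perp}_{R([A_{I_{k-r}}~B])}\mathbf a_j=0$.
   Context: Canonical MMV setting: $m,n,r,k$ are positive integers with $r\le m<n$ and $r\le k$. $A\in\mathbb{R}^{m\times n}$ is the sensing matrix with columns $\mathbf a_1,\dots,\mathbf a_n$; $X\in\mathbb{R}^{n\times r}$ has rows $\mathbf x^1,\dots,\mathbf x^n$, $\operatorname{supp}X=\{i:\mathbf x^i\neq 0\}$ and $|\operatorname{supp}X|=k$; $B=AX\in\mathbb{R}^{m\times r}$ has full column rank $r$. For an index set $I$, $A_I$ is the submatrix of $A$ formed by the columns indexed by $I$, and $[A_I~B]$ denotes horizontal concatenation. $R(M)$ is the column space of $M$, $P_{R(M)}$ the orthogonal projection onto it, and $P^\perp_{R(M)}=\mathrm{Id}-P_{R(M)}$; $^*$ denotes transpose. The lower restricted isometry constant $\delta^L_s(A)$ is the smallest $\delta\ge0$ such that $(1-\delta)\|\mathbf x\|_2^2\le\|A\mathbf x\|_2^2$ for all $\mathbf x$ with at most $s$ nonzero entries. ''The nonzero rows of $X$ are in general position'' means any $r$ of the $k$ nonzero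 rows of $X$ are linearly independent. *)

(* Real matrices are modelled over an arbitrary real closed field R. *)
From HB Require Import structures.
From mathcomp Require Import all_boot all_order all_algebra.
Set Implicit Arguments. Unset Strict Implicit. Unset Printing Implicit Defensive.
Import Order.TTheory GRing.Theory Num.Theory.
Local Open Scope ring_scope.

Section MMV.
Variable R : rcfType.

Definition supp_rows (n r : nat) (X : 'M[R]_(n, r)) : {set 'I_n} :=
  [set i | row i X != 0].

Definition supp_vec (n : nat) (x : 'cV[R]_n) : {set 'I_n} :=
  [set i | x i 0 != 0].

Definition sqnorm (n : nat) (x : 'cV[R]_n) : R := \sum_i (x i 0) ^+ 2.

Definition colsubset (m n : nat) (A : 'M[R]_(m, n)) (I : {set 'I_n}) :
  'M[R]_(m, #|I|) := colsub (fun i : 'I_#|I| => enum_val i) A.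

Definition rowsubset (n r : nat) (X : 'M[R]_(n, r)) (S : {set 'I_n}) :
  'M[R]_(#|S|, r) := rowsub (fun i : 'I_#|S| => enum_val i) X.

Definition lric_admissible (m n : nat) (A : 'M[R]_(m, n)) (s : nat) (d : R) :=
  0 <= d /\ forall x : 'cV[R]_n, (#|supp_vec x| <= s)%N ->
    (1 - d) * sqnorm x <= sqnorm (A *m x).

Definition is_lower_RIC (m n : nat) (A : 'M[R]_(m, n)) (s : nat) (d : R) :=
  lric_admissible A s d /\ forall d', lric_admissible A s d' -> d <= d'.

(* P is the orthogonal projection onto the column space R(M) *)
Definition is_orth_proj (m p : nat) (M : 'M[R]_(m, p)) (P : 'M[R]_m) :=
  P^T = P /\ P *m P = P /\ (P == M^T)%MS.

Definition rows_general_position (n r : nat) (X : 'M[R]_(n, r)) :=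
  forall S : {set 'I_n}, S \subset supp_rows X -> #|S| = r ->
    row_free (rowsubset X S).

End MMV.

From HB Require Import structures.
From mathcomp Require Import all_boot all_order all_algebra.
From mathcomp Require Import zify.
Set Implicit Arguments. Unset Strict Implicit. Unset Printing Implicit Defensive.
Import Order.TTheory GRing.Theory Num.Theory.
Local Open Scope ring_scope.

(* We argue with row spaces: [A_T B] is represented by the stacked matrix
   span_AB A X T = col_mx A_T^T B^T, which has the same rank.
   1. A lower RIC delta^L_s(A) < 1 makes A injective on s-sparse vectors
      (lric_sparse_kernel).
   2. Full rank (span_AB_row_free): if T u supp X is s-sparse and exactly r
      indices of supp X lie outside T, the rows of span_AB A X T are
      independent.  A vanishing combination (y, c) gives x = y + X c (y spread
      over T by embed_set) with A x = 0 and supp x in T u supp X, so x = 0;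
      restricted to supp X \ T this is a combination of r rows of X, so c = 0
      by general position, and then y = 0.
   3. Rank test (support_test_rank): with T = I, rank [A_I B] = k; adding an
      index j outside supp X raises the rank to k + 1, while for j in supp X
      everything stays in the span of A_{supp X}, of rank <= k: (a) <-> (b).
   4. Residual test (residual_test_rank): a_j^T P^perp a_j = |P^perp a_j|^2
      vanishes iff a_j lies in R([A_I B]), i.e. iff a_j does not raise the
      rank: (b) <-> (c). *)

Lemma sqnorm_ge0 (R : rcfType) n (x : 'cV[R]_n) : 0 <= sqnorm x.
Proof. by apply: sumr_ge0 => i _; exact: sqr_ge0. Qed.

Lemma sqnorm_eq0 (R : rcfType) n (x : 'cV[R]_n) : (sqnorm x == 0) = (x == 0).
Proof.
apply/eqP/eqP => [hx | ->]; last by rewrite /sqnorm big1 // => i _; rewrite mxE expr0n.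
apply/matrixP => i j; rewrite ord1 mxE.
have /psumr_eq0P hx0 := hx; move/eqP: (hx0 (fun i _ => sqr_ge0 _) i isT).
by rewrite sqrf_eq0 => /eqP.
Qed.

Lemma quad_idempotent (R : rcfType) m (M : 'M[R]_m) (x : 'cV[R]_m) :
  M^T = M -> M *m M = M -> (x^T *m M *m x) 0 0 = sqnorm (M *m x).
Proof.
move=> Msym Midem.
have -> : x^T *m M *m x = (M *m x)^T *m (M *m x).
  by rewrite trmx_mul Msym -!mulmxA [M *m (M *m x)]mulmxA Midem.
by rewrite /sqnorm mxE; apply: eq_bigr => i _; rewrite !mxE expr2.
Qed.

Lemma lric_sparse_kernel (R : rcfType) m n (A : 'M[R]_(m, n)) s d :
  lric_admissible A s d -> d < 1 ->
  forall x : 'cV_n, (#|supp_vec x| <= s)%N -> A *m x = 0 -> x = 0.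
Proof.
move=> [_ adm] d_lt1 x hx Ax0; apply/eqP; rewrite -sqnorm_eq0 eq_le sqnorm_ge0 andbT.
have sq0 : sqnorm (A *m x) = 0 by apply/eqP; rewrite sqnorm_eq0 Ax0.
by rewrite -(pmulr_rle0 _ (_ : 0 < 1 - d)) ?subr_gt0 // -sq0 adm.
Qed.

Lemma submx_rank_adds (F : fieldType) p q n (v : 'M[F]_(p, n)) (W : 'M[F]_(q, n)) :
  (v <= W)%MS = (\rank (v + W)%MS <= \rank W)%N.
Proof.
have [le_rk eq_rk] := mxrank_leqif_sup (addsmxSr v W).
by rewrite -[(v <= W)%MS]andbT -(submx_refl W) -addsmx_sub -eq_rk eqn_leq le_rk.
Qed.

Lemma orth_proj_residual_eq0 (R : rcfType) m p (M : 'M[R]_(m, p)) (P : 'M[R]_m)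
    (a : 'cV[R]_m) :
  is_orth_proj M P ->
  (a^T *m (1%:M - P) *m a) 0 0 = 0 <-> (a^T <= M^T)%MS.
Proof.
case=> Psym [Pidem /eqmxP PM].
have Qidem : (1%:M - P) *m (1%:M - P) = 1%:M - P.
  by rewrite mulmxBl mul1mx mulmxBr mulmx1 Pidem subrr subr0.
have fixedP : (a^T <= M^T)%MS <-> a^T *m P = a^T.
  rewrite -PM; split => [/submxP [w ->] | <-]; last exact: submxMl.
  by rewrite -mulmxA Pidem.
have Qsym : (1%:M - P)^T = 1%:M - P by rewrite linearB /= trmx1 Psym.
rewrite quad_idempotent //; apply: (iff_trans _ (iff_sym fixedP)).
split => [/eqP | Pa].
  rewrite sqnorm_eq0 mulmxBl mul1mx subr_eq0 => /eqP Pa.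
  by rewrite -Psym -trmx_mul -Pa.
apply/eqP; rewrite sqnorm_eq0 mulmxBl mul1mx subr_eq0.
by rewrite -[P *m a]trmxK trmx_mul Psym Pa trmxK.
Qed.

Section ColumnSpaces.
Variables (R : rcfType) (m n r : nat) (A : 'M[R]_(m, n)) (X : 'M[R]_(n, r)).

(* Row-space representation of [A_T B]: the columns of A_T and of B = AX,
   stacked as rows. *)
Definition span_AB (T : {set 'I_n}) : 'M[R]_(#|T| + r, m) :=
  col_mx (colsubset A T)^T (A *m X)^T.

Lemma trmx_colsubset (T : {set 'I_n}) :
  (colsubset A T)^T = rowsub (fun i : 'I_#|T| => enum_val i) A^T.
Proof. by apply/matrixP => i l; rewrite !mxE. Qed.

Lemma rank_span_AB (T : {set 'I_n}) :
  \rank (row_mx (colsubset A T) (A *m X)) = \rank (span_AB T).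
Proof. by rewrite -mxrank_tr tr_row_mx. Qed.

Lemma col_sub_colsubset (T : {set 'I_n}) t :
  t \in T -> (row t A^T <= (colsubset A T)^T)%MS.
Proof.
move=> tT; rewrite trmx_colsubset.
by rewrite -[t](enum_rankK_in tT) // -row_rowsub row_sub.
Qed.

Lemma colsubset_sub (T : {set 'I_n}) p (Z : 'M[R]_(p, m)) :
  (forall t, t \in T -> (row t A^T <= Z)%MS) -> ((colsubset A T)^T <= Z)%MS.
Proof.
move=> TZ; rewrite trmx_colsubset; apply/row_subP => i.
by rewrite row_rowsub; apply: TZ; exact: enum_valP.
Qed.

Lemma AX_sub_supp : ((A *m X)^T <= (colsubset A (supp_rows X))^T)%MS.
Proof.
rewrite trmx_mul; apply/row_subP => i; rewrite row_mul mulmx_sum_row.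
apply: summx_sub => l _; have [lS | lS] := boolP (l \in supp_rows X).
  by apply: scalemx_sub; exact: col_sub_colsubset.
move: lS; rewrite inE negbK => /eqP/rowP/(_ i); rewrite !mxE => ->.
by rewrite scale0r sub0mx.
Qed.

Lemma col_sub_span_AB (T : {set 'I_n}) t : t \in T -> (row t A^T <= span_AB T)%MS.
Proof.
move=> tT; apply: submx_trans (col_sub_colsubset tT) _.
by rewrite -addsmxE addsmxSl.
Qed.

Lemma AX_sub_span_AB (T : {set 'I_n}) : ((A *m X)^T <= span_AB T)%MS.
Proof. by rewrite -addsmxE addsmxSr. Qed.

Lemma span_AB_setU1 j (T : {set 'I_n}) :
  (span_AB (j |: T) == row j A^T + span_AB T)%MS.
Proof.
apply/andP; split.
  rewrite col_mx_sub; apply/andP; split.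
    apply: colsubset_sub => t; rewrite in_setU1 => /predU1P [-> | tT].
      exact: addsmxSl.
    by apply: submx_trans (col_sub_span_AB tT) (addsmxSr _ _).
  by apply: submx_trans (AX_sub_span_AB T) (addsmxSr _ _).
rewrite addsmx_sub col_sub_span_AB ?setU11 // col_mx_sub AX_sub_span_AB andbT.
by apply: colsubset_sub => t tT; apply: col_sub_span_AB; exact: setU1r.
Qed.

Lemma span_AB_setU1_rank j (T : {set 'I_n}) :
  (\rank (span_AB (j |: T)) <= \rank (span_AB T))%N = (row j A^T <= span_AB T)%MS.
Proof. by rewrite submx_rank_adds (eqmxP (span_AB_setU1 j T)). Qed.

Lemma residual_test_rank (T : {set 'I_n}) (P : 'M[R]_m) j :
  is_orth_proj (row_mx (colsubset A T) (A *m X)) P ->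
  ((col j A)^T *m (1%:M - P) *m col j A) 0 0 = 0 <->
  (\rank (span_AB (j |: T)) <= \rank (span_AB T))%N.
Proof.
move=> PT; rewrite span_AB_setU1_rank /span_AB -tr_row_mx -tr_col.
exact: orth_proj_residual_eq0.
Qed.

(* If T is inside supp X, then [A_T B] lives in the span of A_{supp X}, so its
   rank is at most |supp X|. *)
Lemma rank_span_AB_supp (T : {set 'I_n}) :
  T \subset supp_rows X -> (\rank (span_AB T) <= #|supp_rows X|)%N.
Proof.
move=> TS; apply: leq_trans (rank_leq_row (colsubset A (supp_rows X))^T).
apply: mxrankS; rewrite col_mx_sub AX_sub_supp andbT.
by apply: colsubset_sub => t tT; apply: col_sub_colsubset; exact: (subsetP TS).
Qed.

End ColumnSpaces.

Lemma row_free_trivial_kernel (F : fieldType) p q (M : 'M[F]_(p, q)) :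
  (forall v : 'rV_p, v *m M = 0 -> v = 0) -> row_free M.
Proof.
move=> ker0; rewrite -kermx_eq0; apply/eqP/row_matrixP => i; rewrite row0.
by apply: ker0; apply/sub_kermxP; exact: row_sub.
Qed.

(* embed_set y spreads the coefficients y, indexed by the elements of T, over
   the whole index set 'I_n, with zeros outside T. *)
Definition embed_set (R : pzRingType) n (T : {set 'I_n}) (y : 'rV[R]_#|T|) :
  'rV[R]_n := y *m rowsub (fun i : 'I_#|T| => enum_val i) 1%:M.

Lemma embed_set_out (R : pzRingType) n (T : {set 'I_n}) (y : 'rV[R]_#|T|) i :
  i \notin T -> embed_set y 0 i = 0.
Proof.
move=> iT; rewrite !mxE; apply: big1 => l _; rewrite !mxE.
have /negPf-> : enum_val l != i by apply: contraNneq iT => <-; exact: enum_valP.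
by rewrite mulr0.
Qed.

Lemma embed_set_enum_val (R : pzRingType) n (T : {set 'I_n}) (y : 'rV[R]_#|T|) l :
  embed_set y 0 (enum_val l) = y 0 l.
Proof.
rewrite !mxE (bigD1 l) //= !mxE eqxx mulr1 big1 ?addr0 // => l' l'l.
by rewrite !mxE (inj_eq enum_val_inj) (negPf l'l) mulr0.
Qed.

Lemma embed_set_mulmx (R : pzRingType) n p (T : {set 'I_n}) (y : 'rV[R]_#|T|)
    (M : 'M[R]_(n, p)) :
  embed_set y *m M = y *m rowsub (fun i : 'I_#|T| => enum_val i) M.
Proof. by rewrite /embed_set -mulmxA -rowsubE. Qed.

Section FullRank.
Variables (R : rcfType) (m n r s : nat) (A : 'M[R]_(m, n)) (X : 'M[R]_(n, r)).
Hypothesis A_inj : forall x : 'cV_n, (#|supp_vec x| <= s)%N -> A *m x = 0 -> x = 0.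
Hypothesis X_gp : rows_general_position X.

Lemma comb_rows_out (c : 'rV[R]_r) i : i \notin supp_rows X -> (c *m X^T) 0 i = 0.
Proof.
rewrite inE negbK => /eqP/rowP iX0; rewrite !mxE; apply: big1 => l _.
by move: (iX0 l); rewrite !mxE => ->; rewrite mulr0.
Qed.

Lemma gp_comb_eq0 (U : {set 'I_n}) (c : 'rV[R]_r) :
  U \subset supp_rows X -> #|U| = r ->
  (forall i, i \in U -> (c *m X^T) 0 i = 0) -> c = 0.
Proof.
move=> US Ur cU; apply/eqP; rewrite -(mulmx_free_eq0 _ (B := (rowsubset X U)^T)).
  apply/eqP/rowP => l; rewrite [RHS]mxE -(cU _ (enum_valP l)) !mxE.
  by apply: eq_bigr => i _; rewrite !mxE.
have := X_gp US Ur; rewrite /row_free mxrank_tr => /eqP->; exact/eqP.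
Qed.

Lemma span_AB_row_free (T : {set 'I_n}) :
  (#|T :|: supp_rows X| <= s)%N -> #|supp_rows X :\: T| = r ->
  row_free (span_AB A X T).
Proof.
move=> TSs TSr; apply: row_free_trivial_kernel => v.
rewrite -[v]hsubmxK mul_row_col; set y := lsubmx v; set c := rsubmx v => yc0.
set x := embed_set y + c *m X^T.
have x_out i : i \notin T :|: supp_rows X -> x 0 i = 0.
  rewrite in_setU negb_or => /andP [iT iS].
  by rewrite mxE embed_set_out // comb_rows_out // addr0.
have x0 : x = 0.
  apply: trmx_inj; rewrite trmx0; apply: A_inj.
    apply: leq_trans TSs; apply/subset_leq_card/subsetP => i.
    by rewrite inE mxE; apply: contraR => /x_out ->.
  by rewrite -[A]trmxK -trmx_mul mulmxDl embed_set_mulmx -trmx_colsubset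
    -mulmxA -trmx_mul yc0 trmx0.
have c0 : c = 0.
  apply: (gp_comb_eq0 (subsetDl _ _) TSr) => i; rewrite in_setD => /andP [iT _].
  by move/rowP: x0 => /(_ i); rewrite /x mxE embed_set_out // add0r => ->; rewrite mxE.
have y0 : y = 0.
  apply/rowP => l; move/rowP: x0 => /(_ (enum_val l)).
  by rewrite /x c0 mul0mx addr0 embed_set_enum_val => ->; rewrite !mxE.
by rewrite y0 c0 row_mx0.
Qed.

Lemma rank_span_AB_free (T : {set 'I_n}) :
  (#|T :|: supp_rows X| <= s)%N -> #|supp_rows X :\: T| = r ->
  \rank (span_AB A X T) = (#|T| + r)%N.
Proof. by move=> TSs TSr; apply/eqP; exact: span_AB_row_free. Qed.

Lemma support_test_rank (T : {set 'I_n}) j :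
  T \subset supp_rows X -> #|supp_rows X :\: T| = r -> (#|supp_rows X| < s)%N ->
  j \notin T ->
  (j \in supp_rows X) = (\rank (span_AB A X (j |: T)) <= #|supp_rows X|)%N.
Proof.
move=> TS TSr Ss jT; apply/idP/idP => [jS | ].
  by rewrite rank_span_AB_supp // subUset sub1set jS.
apply: contraLR => jS; have jTSr : #|supp_rows X :\: (j |: T)| = r.
  suff -> : supp_rows X :\: (j |: T) = supp_rows X :\: T by [].
  apply/setP => x; rewrite !in_setD in_setU1 negb_or.
  by case: (eqVneq x j) => [-> | //]; rewrite (negPf jS) !andbF.
have -> : \rank (span_AB A X (j |: T)) = (#|j |: T| + r)%N.
  by apply: (rank_span_AB_free _ jTSr); rewrite -setUA (setUidPr TS) cardsU1 jS.
move: TSr (subset_leq_card TS).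
by rewrite -ltnNge cardsU1 jT cardsD (setIidPr TS) /=; lia.
Qed.

End FullRank.

Theorem corollary1 (R : rcfType) (m n r k : nat)
    (A : 'M[R]_(m, n)) (X : 'M[R]_(n, r))
    (hm : (0 < m)%N) (hn : (0 < n)%N) (hr : (0 < r)%N) (hk : (0 < k)%N)
    (hrm : (r <= m)%N) (hmn : (m < n)%N) (hrk : (r <= k)%N)
    (hsupp : #|supp_rows X| = k)
    (hB : \rank (A *m X) = r)
    (hRIC : exists d : R, is_lower_RIC A (2 * k - r + 1) d /\ 0 <= d < 1)
    (hgp : rows_general_position X)
    (I : {set 'I_n}) (hI : I \subset supp_rows X) (hIcard : #|I| = (k - r)%N)
    (P : 'M[R]_m) (hP : is_orth_proj (row_mx (colsubset A I) (A *m X)) P)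
    (j : 'I_n) (hj : j \notin I) :
  [/\ (j \in supp_rows X) <->
        (\rank (row_mx (colsubset A (j |: I)) (A *m X)) < k + 1)%N,
      (\rank (row_mx (colsubset A (j |: I)) (A *m X)) < k + 1)%N <->
        ((col j A)^T *m (1%:M - P) *m col j A) 0 0 = 0
    & ((col j A)^T *m (1%:M - P) *m col j A) 0 0 = 0 <->
        (j \in supp_rows X)].
Proof.
case: hRIC => d [[adm _] /andP [_ d_lt1]].
have A_inj := lric_sparse_kernel adm d_lt1.
set S := supp_rows X in hsupp hI *.
have ISr : #|S :\: I| = r by rewrite cardsD (setIidPr hI) hsupp hIcard; lia.
have S_sparse : (#|S| < 2 * k - r + 1)%N by rewrite hsupp; lia.
have rk_I : \rank (span_AB A X I) = k.
  rewrite (rank_span_AB_free A_inj hgp _ ISr) ?hIcard; first by lia.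
  by rewrite (setUidPr hI) ltnW.
have a_b := support_test_rank A_inj hgp hI ISr S_sparse hj.
have b_c := residual_test_rank j hP.
rewrite rk_I hsupp in a_b b_c; rewrite !rank_span_AB addn1 ltnS a_b.
by split=> //; exact: iff_sym.
Qed.
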